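(* Every sequential Thiele rule and sequential Phragmén satisfy participation for unrepresented voters. The method of equal shares violates participation for unrepresented voters: there exist a profile $A$, a committee size $k$, and a voter $i\in N_A$ such that $W\cap A_i=\emptyset$ for some (indeed every) $W\in f(A,k)$ but $f(A_{-i},k)\succ_i f(A,k)$, where $f$ is the method of equal shares.
   Context: Candidates form a finite set $C$, $|C|=m>1$. An approval profile $A$ has a nonempty finite voter set $N_A$, each $i\in N_A$ having a nonempty ballot $A_i\subseteq C$; $N_A(c)=\{i\in N_A:c\in A_i\}$, $n=|N_A|$, $A_{-i}$ is $A$ with voter $i$ removed. Committees of size $k\in\{1,\dots,m-1\}$ are $k$-subsets of $C$; an ABC voting rule $f$ returns a nonempty set $f(A,k)$ of committees. Preferences: $W\succsim_i W'$ iff $|W\cap A_i|\ge|W'\cap A_i|$, $W\succ_i W'$ iff $>$. Kelly's extension: $X\succsim_i Y$ iff $W\succsim_i W'$ for all $W\in X,W'\in Y$; $X\succ_i Y$ iff $X\succsim_i Y$ and $W\succ_i W'$ for some $W\in X,W'\in Y$. A rule $f$ satisfies participation for unrepresented voters if $f(A_{-i},k)\not\succ_i f(A,k)$ for all profiles $A$ (with $|N_A|\ge2$), sizes $k$, and voters $i\in N_A$ for which some $W\in f(A,k)$ satisfies $W\cap A_i=\emptyset$. All rules below add candidates sequentially and return every committee obtainable under some tie-breaking. Sequential Thiele rule: given $s:\mathbb N_0\to\mathbb Q$ with $s(0)=0$, $s(1)>0$, $s$ nondecreasing and concave, and $\hat s(A,W)=\sum_{i\in N_A}s(|A_i\cap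 W|)$; having chosen $c_1,\dots,c_\ell$, the next candidate is any $x\notin\{c_1,\dots,c_\ell\}$ maximizing $\hat s(A,\{c_1,\dots,c_\ell,x\})$. Sequential Phragmén: voters' budgets start at 0 and grow at unit rate; as soon as the supporters of an unchosen candidate $c$ have total budget 1, such a $c$ is bought and its supporters' budgets reset to 0; repeat until $k$ are bought. Method of equal shares: initial budgets $k/n$, each candidate costs 1. Phase 1: with current budgets $x_r$, let $C_r$ be unchosen candidates whose supporters have total budget $\ge1$; if nonempty, buy any $c\in C_r$ minimizing $\rho(c)$ where $\sum_{i\in N_A(c)}\min(\rho(c),x_r(i))=1$, and each supporter pays $\min(\rho(c),x_r(i))$; stop when $C_r=\emptyset$. Phase 2: run sequential Phragmén starting from the remaining budgets until $k$ candidates are bought. *)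

From mathcomp Require Import all_boot all_order all_algebra.
Set Implicit Arguments. Unset Strict Implicit. Unset Printing Implicit Defensive.
Import Order.TTheory GRing.Theory Num.Theory.
Local Open Scope ring_scope.

(* Candidates: a finType C.  A profile is a sequence of ballots; voter i is
   the index i < size A, with ballot [ballot A i].  N_A = {0,..,size A - 1}. *)

Definition ballot {C : finType} (A : seq {set C}) (i : nat) : {set C} :=
  nth set0 A i.

Definition wf_profile {C : finType} (A : seq {set C}) : Prop :=
  (0 < size A)%N /\ (forall X, X \in A -> X != set0).

Definition remove_voter {C : finType} (A : seq {set C}) (i : nat) :=
  take i A ++ drop i.+1 A.

Definition committee_of {C : finType} (l : seq C) : {set C} := [set x in l].

(* an ABC rule: f A k W  <->  W \in f(A,k) *)
Definition abc_rule (C : finType) := seq {set C} -> nat -> {set C} -> Prop.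

Definition supporters {C : finType} (A : seq {set C}) (c : C) : seq nat :=
  [seq i <- iota 0 (size A) | c \in ballot A i].

Definition supp_budget {C : finType} (b : nat -> rat) (A : seq {set C}) (c : C) : rat :=
  \sum_(i <- supporters A c) b i.

Definition thiele_fn (s : nat -> rat) : Prop :=
  s 0%N = 0 /\ 0 < s 1%N /\ (forall j, s j <= s j.+1) /\
  (forall j, s j.+2 - s j.+1 <= s j.+1 - s j).

Definition thiele_score {C : finType} (s : nat -> rat) (A : seq {set C}) (W : {set C}) : rat :=
  \sum_(X <- A) s #|X :&: W|.

Inductive thiele_run {C : finType} (s : nat -> rat) (A : seq {set C}) : seq C -> Prop :=
| thiele_nil : thiele_run s A [::]
| thiele_cons l c :
    thiele_run s A l -> c \notin l ->
    (forall c', c' \notin l ->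
       thiele_score s A (committee_of (rcons l c')) <=
       thiele_score s A (committee_of (rcons l c))) ->
    thiele_run s A (rcons l c).

Definition seq_thiele {C : finType} (s : nat -> rat) : abc_rule C :=
  fun A k W => exists l, thiele_run s A l /\ size l = k /\ W = committee_of l.

(* time until the supporters of c have total budget 1 *)
Definition phr_time {C : finType} (A : seq {set C}) (b : nat -> rat) (c : C) : rat :=
  (1 - supp_budget b A c) / (size (supporters A c))%:R.

(* A candidate without supporters never
   reaches budget 1; it is added (arbitrarily) only when no unchosen candidate
   has supporters. *)
Inductive phr_run {C : finType} (A : seq {set C}) (l0 : seq C) (b0 : nat -> rat)
  : seq C -> (nat -> rat) -> Prop :=
| phr_refl : phr_run A l0 b0 l0 b0
| phr_step l b c :
    phr_run A l0 b0 l b -> c \notin l -> supporters A c != [::] ->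
    (forall c', c' \notin l -> supporters A c' != [::] ->
       phr_time A b c <= phr_time A b c') ->
    phr_run A l0 b0 (rcons l c)
      (fun i => if i \in supporters A c then 0 else b i + phr_time A b c)
| phr_step_unsupported l b c :
    phr_run A l0 b0 l b -> c \notin l ->
    (forall c', c' \notin l -> supporters A c' = [::]) ->
    phr_run A l0 b0 (rcons l c) b.

Definition seq_phragmen {C : finType} : abc_rule C :=
  fun A k W => exists l b, phr_run A [::] (fun _ => 0) l b /\
                           size l = k /\ W = committee_of l.

Definition mes_cost {C : finType} (A : seq {set C}) (x : nat -> rat) (c : C) (rho : rat) : rat :=
  \sum_(i <- supporters A c) Num.min rho (x i).

Definition mes_affordable {C : finType} (A : seq {set C}) (x : nat -> rat) (l : seq C) (c : C) : bool :=
  (c \notin l) && (1 <= supp_budget x A c).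

Inductive mes_run {C : finType} (A : seq {set C}) (k : nat) : seq C -> (nat -> rat) -> Prop :=
| mes_start : mes_run A k [::] (fun _ => k%:R / (size A)%:R)
| mes_step l x c rho :
    mes_run A k l x -> mes_affordable A x l c -> mes_cost A x c rho = 1 ->
    (forall c' rho', mes_affordable A x l c' -> mes_cost A x c' rho' = 1 -> rho <= rho') ->
    mes_run A k (rcons l c)
      (fun i => if i \in supporters A c then x i - Num.min rho (x i) else x i).

Definition mes {C : finType} : abc_rule C :=
  fun A k W => exists l x l' y,
    mes_run A k l x /\ (forall c, ~~ mes_affordable A x l c) /\
    phr_run A l x l' y /\ size l' = k /\ W = committee_of l'.

Definition kelly_weak {C : finType} (Ai : {set C}) (X Y : {set C} -> Prop) : Prop :=
  forall W W', X W -> Y W' -> (#|W' :&: Ai| <= #|W :&: Ai|)%N.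

Definition kelly_strict {C : finType} (Ai : {set C}) (X Y : {set C} -> Prop) : Prop :=
  kelly_weak Ai X Y /\
  exists W W', X W /\ Y W' /\ (#|W' :&: Ai| < #|W :&: Ai|)%N.

Definition participation_unrep {C : finType} (f : abc_rule C) : Prop :=
  forall (A : seq {set C}) (k i : nat),
    wf_profile A -> (2 <= size A)%N -> (1 <= k < #|C|)%N -> (i < size A)%N ->
    (exists W, f A k W /\ W :&: ballot A i = set0) ->
    ~ kelly_strict (ballot A i) (f (remove_voter A i) k) (f A k).

(* Removing voter i leaves unchanged the marginal Thiele score, resp. the
   Phragmen time to afford, of every candidate outside A_i, and can only lower
   the score, resp. delay, those inside A_i (for Phragmen because no unchosen
   candidate is ever funded beyond 1).  Hence a run on A that never selects a
   candidate of A_i is also a run on A_{-i}, and a run on A_{-i} selecting a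
   candidate of A_i can be followed on A until A selects one as well.  So if
   some outcome W on A misses A_i, then W is an outcome on A_{-i}, and
   f(A_{-i}) >_i f(A) would give an outcome on A_{-i}, hence one on A, meeting
   A_i, contradicting f(A_{-i}) >=_i f(A) at W.

   For equal shares take k = 3, candidates 0..3 and ten voters: voter 0
   approves {0}, voters 1-2 approve {1,2,3}, voters 3-5 approve {0,1} and
   voters 6-9 approve {2,3}.  With budgets 3/10 every outcome is {1,2,3};
   without voter 0 the budgets rise to 1/3 and {0,2,3} becomes an outcome. *)

From mathcomp Require Import all_boot all_order all_algebra.
From mathcomp Require Import zify ring lra.
Set Implicit Arguments. Unset Strict Implicit. Unset Printing Implicit Defensive.
Import Order.TTheory GRing.Theory Num.Theory.
Local Open Scope ring_scope.

Lemma sumr_const_seq (I : Type) (R : nmodType) (r : seq I) (x : R) :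
  \sum_(j <- r) x = x *+ size r.
Proof. by rewrite big_const_seq count_predT iter_addr_0. Qed.

(** * Removing a voter *)

Section RemoveVoter.
Variable C : finType.
Implicit Types (A : seq {set C}) (c : C) (l : seq C) (b : nat -> rat).

Lemma size_remove_voter A i : (i < size A)%N -> size (remove_voter A i) = (size A).-1.
Proof. by move=> lt_i; rewrite /remove_voter size_cat size_take size_drop lt_i; lia. Qed.

Lemma ballot_remove_voter A i j : (i < size A)%N -> (j < (size A).-1)%N ->
  ballot (remove_voter A i) j = ballot A (bump i j).
Proof.
move=> lt_i lt_j; rewrite /ballot /remove_voter nth_cat size_take lt_i /bump.
case: ltnP => [lt_ji|le_ij]; first by rewrite nth_take // leqNgt lt_ji.
by rewrite nth_drop; congr nth; rewrite add1n; lia.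
Qed.

Lemma mem_supporters A c j :
  (j \in supporters A c) = (j < size A)%N && (c \in ballot A j).
Proof. by rewrite /supporters mem_filter mem_iota add0n andbC. Qed.

Lemma mem_supporters_remove_voter A i c j : (i < size A)%N -> (j < (size A).-1)%N ->
  (j \in supporters (remove_voter A i) c) = (bump i j \in supporters A c).
Proof.
move=> lt_i lt_j; rewrite !mem_supporters size_remove_voter // lt_j.
have lt_bump : (bump i j < size A)%N.
  by rewrite /bump; case: leqP => ?; rewrite ?add1n ?add0n; lia.
by rewrite (ballot_remove_voter lt_i lt_j) lt_bump.
Qed.

Lemma supp_budget_ord b A c :
  supp_budget b A c = \sum_(j < size A) (if c \in ballot A j then b j else 0).
Proof.
rewrite /supp_budget /supporters big_filter big_mkcond /=.
by rewrite -(big_mkord xpredT (fun j => if c \in ballot A j then b j else 0)) /index_iota subn0.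
Qed.

Lemma eq_supp_budget b1 b2 A c : (forall j, (j < size A)%N -> b1 j = b2 j) ->
  supp_budget b1 A c = supp_budget b2 A c.
Proof.
move=> eq_b; rewrite /supp_budget !big_seq; apply: eq_bigr => j.
by rewrite mem_supporters => /andP[lt_j _]; apply: eq_b.
Qed.

Lemma supp_budget_remove_voter b A i c : (i < size A)%N ->
  supp_budget b A c = supp_budget (b \o bump i) (remove_voter A i) c
                      + (if c \in ballot A i then b i else 0).
Proof.
move=> lt_i; rewrite !supp_budget_ord (bigD1_ord (Ordinal lt_i)) //= addrC.
congr (_ + _); rewrite size_remove_voter //; apply: eq_bigr => j _.
by rewrite ballot_remove_voter.
Qed.

Lemma supp_budget1 A c : supp_budget (fun _ => 1) A c = (size (supporters A c))%:R.
Proof. exact: sumr_const_seq. Qed.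

Lemma size_supporters_remove_voter A i c : (i < size A)%N ->
  size (supporters A c) = (size (supporters (remove_voter A i) c) + (c \in ballot A i))%N.
Proof.
move=> lt_i; apply/eqP; rewrite -(eqr_nat rat) natrD -!supp_budget1.
by rewrite (supp_budget_remove_voter _ _ lt_i); case: (c \in ballot A i).
Qed.

Lemma exists_notin l : (size l < #|C|)%N -> exists c, c \notin l.
Proof.
move=> lt_l; apply/existsP; rewrite -negb_forall; apply/negP => /forallP l_full.
have : (#|C| <= #|l|)%N by apply/subset_leq_card/subsetP => x _; apply: l_full.
by move/leq_trans/(_ (card_size l)); rewrite leqNgt lt_l.
Qed.

Lemma committee_disjointE l (X : {set C}) :
  (committee_of l :&: X == set0) = all (fun c => c \notin X) l.
Proof.
apply/eqP/allP => [dis c cl|out]; last first.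
  by apply/setP => x; rewrite !inE; apply/negP => /andP[/out/negP].
by apply/negP => cX; have := in_set0 c; rewrite -dis !inE cl cX.
Qed.

Lemma card_committee_gt0 l (X : {set C}) :
  (0 < #|committee_of l :&: X|)%N = has (fun c => c \in X) l.
Proof.
rewrite card_gt0 committee_disjointE -has_predC.
by apply: eq_has => c /=; rewrite negbK.
Qed.

Lemma not_kelly_strict_remove_voter (f : abc_rule C) A k i :
  (forall W, f A k W -> W :&: ballot A i = set0 -> f (remove_voter A i) k W) ->
  (forall W, f (remove_voter A i) k W -> (0 < #|W :&: ballot A i|)%N ->
     exists W', f A k W' /\ (0 < #|W' :&: ballot A i|)%N) ->
  (exists W, f A k W /\ W :&: ballot A i = set0) ->
  ~ kelly_strict (ballot A i) (f (remove_voter A i) k) (f A k).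
Proof.
move=> keep lift [W0 [fW0 disW0]] [weak [W [W' [fW [fW' lt_W'W]]]]].
have [W'' [fW'' meetW'']] := lift W fW (leq_ltn_trans (leq0n _) lt_W'W).
have := weak _ _ (keep _ fW0 disW0) fW''.
by rewrite disW0 cards0 leqn0 => /eqP W''0; rewrite W''0 in meetW''.
Qed.

End RemoveVoter.

(** * Sequential Thiele rules *)

Section SeqThiele.
Variables (C : finType) (s : nat -> rat).
Hypothesis s_thiele : thiele_fn s.
Implicit Types (A : seq {set C}) (c : C) (l : seq C).

Lemma thiele_fn_ge0 j : 0 <= s j.
Proof.
have [s0 [_ [s_mono _]]] := s_thiele.
by elim: j => [|j IH]; [rewrite s0 | exact: le_trans IH (s_mono j)].
Qed.

Lemma exists_thiele_argmax A l c0 : c0 \notin l ->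
  exists2 M, M \notin l & forall c, c \notin l ->
    thiele_score s A (committee_of (rcons l c)) <=
    thiele_score s A (committee_of (rcons l M)).
Proof.
move=> c0l.
by case: (@arg_maxP _ _ C c0 [pred x | x \notin l]
  (fun x => thiele_score s A (committee_of (rcons l x))) c0l) => M; exists M.
Qed.

Lemma thiele_run_extend A l n : thiele_run s A l -> (size l <= n <= #|C|)%N ->
  exists l', [/\ thiele_run s A l', size l' = n & {subset l <= l'}].
Proof.
move=> run_l; elim: n => [|n IH] /andP[le_ln le_nC].
  by exists l; split=> //; apply/eqP; rewrite -leqn0.
move: le_ln; rewrite leq_eqVlt => /orP[/eqP <-|lt_ln]; first by exists l; split.
have [l' [run_l' size_l' sub_l]] := IH ltac:(lia).
have [c0 c0l'] := exists_notin (l := l') ltac:(lia).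
have [M Ml' Mmax] := exists_thiele_argmax A c0l'.
exists (rcons l' M); split; [exact: thiele_cons | by rewrite size_rcons size_l' |].
by move=> x /sub_l xl'; rewrite mem_rcons inE xl' orbT.
Qed.

Variables (A : seq {set C}) (i : nat).
Hypothesis lt_i : (i < size A)%N.
Local Notation A' := (remove_voter A i).
Local Notation Ai := (ballot A i).

Lemma thiele_score_remove_voter W :
  thiele_score s A W = thiele_score s A' W + s #|Ai :&: W|.
Proof.
rewrite /thiele_score -{1}(cat_take_drop i A) (drop_nth set0 lt_i).
by rewrite /remove_voter /ballot !big_cat big_cons /= [s _ + _]addrC addrA.
Qed.

Lemma thiele_score_le_remove_voter W : thiele_score s A' W <= thiele_score s A W.
Proof. by rewrite thiele_score_remove_voter lerDl thiele_fn_ge0. Qed.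

Lemma thiele_score_disjoint l : all (fun c => c \notin Ai) l ->
  thiele_score s A (committee_of l) = thiele_score s A' (committee_of l).
Proof.
rewrite -committee_disjointE setIC => /eqP dis.
by rewrite thiele_score_remove_voter dis cards0 (proj1 s_thiele) addr0.
Qed.

Lemma thiele_run_remove_voter l :
  thiele_run s A l -> all (fun c => c \notin Ai) l -> thiele_run s A' l.
Proof.
elim: l / => [|l c _ IH cl cmax]; first by constructor.
rewrite all_rcons => /andP[cAi l_out].
apply: thiele_cons => [||c' c'l]; [exact: IH | by [] |].
rewrite -[X in _ <= X]thiele_score_disjoint ?all_rcons ?cAi //.
exact: le_trans (thiele_score_le_remove_voter _) (cmax c' c'l).
Qed.

Lemma thiele_run_of_remove_voter l : thiele_run s A' l ->
  (all (fun c => c \notin Ai) l /\ thiele_run s A l) \/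
  exists l', [/\ thiele_run s A l', (size l' <= size l)%N & has (fun c => c \in Ai) l'].
Proof.
elim: l / => [|l c _ IH cl cmax]; first by left; split=> //; constructor.
case: IH => [[l_out run_l]|[l' [run_l' size_l' l'_in]]]; last first.
  by right; exists l'; rewrite size_rcons ltnW.
have [M Ml Mmax] := exists_thiele_argmax A cl.
case: (boolP (M \in Ai)) => MAi.
  by right; exists (rcons l M); rewrite !size_rcons has_rcons MAi; split=> //; apply: thiele_cons.
have cmaxA c' : c' \notin l ->
    thiele_score s A (committee_of (rcons l c')) <=
    thiele_score s A (committee_of (rcons l c)).
  move=> c'l; apply: le_trans (Mmax c' c'l) _.
  rewrite thiele_score_disjoint ?all_rcons ?MAi //.
  exact: le_trans (cmax M Ml) (thiele_score_le_remove_voter _).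
have run_lc := thiele_cons run_l cl cmaxA.
case: (boolP (c \in Ai)) => cAi; first by right; exists (rcons l c); rewrite has_rcons cAi.
by left; rewrite all_rcons cAi l_out.
Qed.

End SeqThiele.

Lemma seq_thiele_participation (C : finType) (s : nat -> rat) :
  thiele_fn s -> participation_unrep (@seq_thiele C s).
Proof.
move=> s_thiele A k i _ _ /andP[_ lt_kC] lt_i.
apply: not_kelly_strict_remove_voter => [W [l [run_l [size_l ->]]] dis|W [l [run_l [size_l ->]]]].
  exists l; split=> //; apply: (thiele_run_remove_voter s_thiele lt_i run_l).
  by rewrite -committee_disjointE dis.
rewrite card_committee_gt0 => /hasP[c cl cAi].
case: (thiele_run_of_remove_voter s_thiele lt_i run_l) => [[l_out _]|[l' [run_l' le_l' l'_in]]].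
  by move/allP/(_ c cl): l_out; rewrite cAi.
have [l'' [run_l'' size_l'' sub_l']] := thiele_run_extend (n := k) run_l' ltac:(lia).
exists (committee_of l''); split; first by exists l''.
by rewrite card_committee_gt0; case/hasP: l'_in => x /sub_l' xl'' xAi; apply/hasP; exists x.
Qed.

(** * Sequential Phragmen *)

Lemma le_time_extra_supporter (R : realFieldType) (B x : R) (N : nat) :
  (0 < N)%N -> 0 <= x -> B + x <= 1 -> (1 - (B + x)) / (N + 1)%:R <= (1 - B) / N%:R.
Proof.
move=> N_gt0 x_ge0 le_Bx1.
have N_pos : 0 < N%:R :> R by rewrite ltr0n.
set t := (1 - B) / N%:R.
have tN : t * N%:R = 1 - B by rewrite /t divfK // gt_eqF.
have t_ge0 : 0 <= t by rewrite /t divr_ge0 ?ler0n // subr_ge0; lra.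
by rewrite ler_pdivrMr ?ltr0n ?addn1 // -addn1 natrD mulrDr mulr1 tN; lra.
Qed.

Section SeqPhragmen.
Variables (C : finType) (A : seq {set C}).
Implicit Types (c : C) (l : seq C) (b : nat -> rat).

Definition phr_next b c : nat -> rat :=
  fun j => if j \in supporters A c then 0 else b j + phr_time A b c.

Lemma exists_phr_argmin l b c0 : c0 \notin l -> supporters A c0 != [::] ->
  exists2 M, (M \notin l) && (supporters A M != [::]) &
    forall c, c \notin l -> supporters A c != [::] -> phr_time A b M <= phr_time A b c.
Proof.
move=> c0l c0s; have c0P : (c0 \notin l) && (supporters A c0 != [::]) by rewrite c0l c0s.
case: (@arg_minP _ _ C c0 [pred x | (x \notin l) && (supporters A x != [::])]
  (phr_time A b) c0P) => M MP Mmin.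
by exists M => // c cl cs; apply: Mmin; rewrite /= cl cs.
Qed.

Lemma phr_run_rcons l0 b0 l b : phr_run A l0 b0 l b -> (size l < #|C|)%N ->
  exists c b', phr_run A l0 b0 (rcons l c) b'.
Proof.
move=> run_l lt_lC; have [c0 c0l] := exists_notin lt_lC.
case: (boolP [exists c, (c \notin l) && (supporters A c != [::])]).
  case/existsP => c /andP[cl cs].
  have [M /andP[Ml Ms] Mmin] := exists_phr_argmin b cl cs.
  by exists M, (phr_next b M); apply: phr_step.
move=> none; exists c0, b; apply: phr_step_unsupported => // c cl.
by apply/eqP; apply: contraNT none => cs; apply/existsP; exists c; rewrite cl.
Qed.

Lemma phr_run_extend l0 b0 l b n : phr_run A l0 b0 l b -> (size l <= n <= #|C|)%N ->
  exists l' b', [/\ phr_run A l0 b0 l' b', size l' = n & {subset l <= l'}].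
Proof.
move=> run_l; elim: n => [|n IH] /andP[le_ln le_nC].
  by exists l, b; split=> //; apply/eqP; rewrite -leqn0.
move: le_ln; rewrite leq_eqVlt => /orP[/eqP <-|lt_ln]; first by exists l, b; split.
have [l' [b' [run_l' size_l' sub_l]]] := IH ltac:(lia).
have [c [b'' run_l'c]] := phr_run_rcons run_l' ltac:(lia).
exists (rcons l' c), b''; split; [by [] | by rewrite size_rcons size_l' |].
by move=> x /sub_l xl'; rewrite mem_rcons inE xl' orbT.
Qed.

(* No unchosen candidate is ever over-funded: each purchase happens as soon as
   some budget reaches 1. *)
Lemma phr_run_budgets l b : phr_run A [::] (fun _ => 0) l b ->
  (forall j, 0 <= b j) /\ (forall c, c \notin l -> supp_budget b A c <= 1).
Proof.
elim: l b / => [|l b c _ [b_ge0 b_le1] cl cs cmin|l b c _ [b_ge0 b_le1] cl _].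
- by split=> // c _; rewrite /supp_budget big1.
- have t_ge0 : 0 <= phr_time A b c by rewrite divr_ge0 ?subr_ge0 ?b_le1.
  split=> [j|c']; first by case: ifP => // _; rewrite addr_ge0.
  rewrite mem_rcons inE negb_or => /andP[_ c'l].
  have [c's0|c's] := eqVneq (supporters A c') [::].
    by rewrite /supp_budget c's0 big_nil ler01.
  have N_pos : 0 < (size (supporters A c'))%:R :> rat by rewrite ltr0n lt0n size_eq0.
  have le_next : supp_budget (phr_next b c) A c' <=
      supp_budget b A c' + (size (supporters A c'))%:R * phr_time A b c.
    rewrite mulr_natl -sumr_const_seq -big_split /=; apply: ler_sum => j _.
    by rewrite /phr_next; case: ifP => // _; rewrite addr_ge0.
  have le_share : (size (supporters A c'))%:R * phr_time A b c <= 1 - supp_budget b A c'.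
    by rewrite mulrC -ler_pdivlMr //; apply: cmin.
  lra.
- by split=> // c'; rewrite mem_rcons inE negb_or => /andP[_]; apply: b_le1.
Qed.

End SeqPhragmen.

Section PhragmenRemoveVoter.
Variables (C : finType) (A : seq {set C}) (i : nat).
Hypothesis lt_i : (i < size A)%N.
Local Notation A' := (remove_voter A i).
Local Notation Ai := (ballot A i).
Local Notation phr_run0 B := (phr_run B [::] (fun _ => 0)).
Implicit Types (c : C) (l : seq C) (b : nat -> rat).

Definition budget_removed (b' b : nat -> rat) :=
  forall j, (j < (size A).-1)%N -> b' j = b (bump i j).

Lemma supp_budget_removed b' b c : budget_removed b' b ->
  supp_budget b A c = supp_budget b' A' c + (if c \in Ai then b i else 0).
Proof.
move=> rem; rewrite (supp_budget_remove_voter _ _ lt_i); congr (_ + _).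
by apply: eq_supp_budget => j; rewrite size_remove_voter // => /rem ->.
Qed.

Lemma phr_time_removed_notin b' b c : budget_removed b' b -> c \notin Ai ->
  phr_time A b c = phr_time A' b' c.
Proof.
move=> rem cAi; rewrite /phr_time (supp_budget_removed _ rem).
by rewrite (size_supporters_remove_voter c lt_i) (negbTE cAi) addr0 addn0.
Qed.

Lemma phr_time_removed_in b' b c : budget_removed b' b -> c \in Ai -> 0 <= b i ->
  supp_budget b A c <= 1 -> supporters A' c != [::] -> phr_time A b c <= phr_time A' b' c.
Proof.
move=> rem cAi b_ge0 b_le1 cs; rewrite (supp_budget_removed _ rem) cAi in b_le1.
rewrite /phr_time (supp_budget_removed _ rem) (size_supporters_remove_voter c lt_i) cAi.
by apply: le_time_extra_supporter; rewrite // lt0n size_eq0.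
Qed.

Lemma supporters_neq_nil_of_removed c : supporters A' c != [::] -> supporters A c != [::].
Proof. by rewrite -!size_eq0 (size_supporters_remove_voter c lt_i) addn_eq0 negb_and => ->. Qed.

Lemma supporters_removed_neq_nil c : c \notin Ai -> supporters A c != [::] ->
  supporters A' c != [::].
Proof. by move=> cAi; rewrite -!size_eq0 (size_supporters_remove_voter c lt_i) (negbTE cAi) addn0. Qed.

Lemma budget_removed_next b' b c : budget_removed b' b -> c \notin Ai ->
  budget_removed (phr_next A' b' c) (phr_next A b c).
Proof.
move=> rem cAi j lt_j; rewrite /phr_next (mem_supporters_remove_voter c lt_i lt_j) -rem //.
by rewrite (phr_time_removed_notin rem cAi).
Qed.

Lemma phr_run_remove_voter l b : phr_run0 A l b -> all (fun c => c \notin Ai) l ->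
  exists b', phr_run0 A' l b' /\ budget_removed b' b.
Proof.
elim: l b / => [|l b c run_l IH cl cs cmin|l b c _ IH cl unsup].
- by exists (fun _ => 0); split=> //; constructor.
- rewrite all_rcons => /andP[cAi /IH[b' [run_l' rem]]].
  have [b_ge0 b_le1] := phr_run_budgets run_l.
  exists (phr_next A' b' c); split; last exact: budget_removed_next.
  apply: phr_step => //; first exact: supporters_removed_neq_nil.
  move=> c' c'l c's; rewrite -(phr_time_removed_notin rem cAi).
  apply: le_trans (cmin c' c'l (supporters_neq_nil_of_removed c's)) _.
  have [c'Ai|c'Ai] := boolP (c' \in Ai); last by rewrite (phr_time_removed_notin rem c'Ai).
  exact: phr_time_removed_in rem c'Ai (b_ge0 i) (b_le1 c' c'l) c's.
- rewrite all_rcons => /andP[cAi /IH[b' [run_l' rem]]].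
  exists b'; split=> //; apply: phr_step_unsupported => // c' c'l.
  apply/eqP; rewrite -size_eq0; have := size_supporters_remove_voter c' lt_i.
  by rewrite (unsup c' c'l) /=; lia.
Qed.

Definition phr_tracked l b' :=
  all (fun c => c \notin Ai) l /\ exists2 b, phr_run0 A l b & budget_removed b' b.

Definition phr_meets_ballot_within n :=
  exists l b, [/\ phr_run0 A l b, (size l <= n)%N & has (fun c => c \in Ai) l].

Lemma phr_meets_ballot_withinS n :
  phr_meets_ballot_within n -> phr_meets_ballot_within n.+1.
Proof. by case=> l [b [run_l le_ln l_in]]; exists l, b; split=> //; apply: leqW. Qed.

Lemma phr_tracked_step l b' c : phr_tracked l b' -> c \notin l ->
  supporters A' c != [::] ->
  (forall c', c' \notin l -> supporters A' c' != [::] -> phr_time A' b' c <= phr_time A' b' c') ->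
  phr_tracked (rcons l c) (phr_next A' b' c) \/ phr_meets_ballot_within (size l).+1.
Proof.
move=> [l_out [b run_l rem]] cl cs cmin.
have [b_ge0 b_le1] := phr_run_budgets run_l.
have cs_A := supporters_neq_nil_of_removed cs.
have [M /andP[Ml Ms] Mmin] := exists_phr_argmin b cl cs_A.
have [MAi|MAi] := boolP (M \in Ai).
  right; exists (rcons l M), (phr_next A b M).
  by rewrite size_rcons has_rcons MAi; split=> //; apply: phr_step.
have cminA c' : c' \notin l -> supporters A c' != [::] -> phr_time A b c <= phr_time A b c'.
  move=> c'l c's; apply: le_trans (Mmin c' c'l c's).
  rewrite (phr_time_removed_notin rem MAi).
  apply: le_trans (cmin M Ml (supporters_removed_neq_nil MAi Ms)).
  have [cAi|cAi] := boolP (c \in Ai); last by rewrite (phr_time_removed_notin rem cAi).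
  exact: phr_time_removed_in rem cAi (b_ge0 i) (b_le1 c cl) cs.
have run_lc := phr_step run_l cl cs_A cminA.
have [cAi|cAi] := boolP (c \in Ai).
  by right; exists (rcons l c), (phr_next A b c); rewrite size_rcons has_rcons cAi; split.
left; split; first by rewrite all_rcons cAi l_out.
by exists (phr_next A b c) => //; apply: budget_removed_next.
Qed.

Lemma phr_tracked_step_unsupported l b' c : phr_tracked l b' -> c \notin l ->
  (forall c', c' \notin l -> supporters A' c' = [::]) ->
  phr_tracked (rcons l c) b' \/ phr_meets_ballot_within (size l).+1.
Proof.
move=> [l_out [b run_l rem]] cl unsup.
case: (boolP [exists c', (c' \notin l) && (supporters A c' != [::])]).
  case/existsP => c0 /andP[c0l c0s].
  have [M /andP[Ml Ms] Mmin] := exists_phr_argmin b c0l c0s.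
  have MAi : M \in Ai.
    by apply: contraT => MAi; have := supporters_removed_neq_nil MAi Ms; rewrite unsup.
  right; exists (rcons l M), (phr_next A b M).
  by rewrite size_rcons has_rcons MAi; split=> //; apply: phr_step.
move=> none; have unsupA c' : c' \notin l -> supporters A c' = [::].
  by move=> c'l; apply/eqP; apply: contraNT none => c's; apply/existsP; exists c'; rewrite c'l.
have cAi : c \notin Ai.
  by apply/negP => cAi; have := size_supporters_remove_voter c lt_i; rewrite unsupA // unsup // cAi.
left; split; first by rewrite all_rcons cAi l_out.
by exists b => //; apply: phr_step_unsupported.
Qed.

Lemma phr_run_of_remove_voter l b' : phr_run0 A' l b' ->
  phr_tracked l b' \/ phr_meets_ballot_within (size l).
Proof.
elim: l b' / => [|l b' c _ IH cl cs cmin|l b' c _ IH cl unsup].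
- by left; split=> //; exists (fun _ => 0) => //; constructor.
- rewrite size_rcons; case: IH => [tr|/phr_meets_ballot_withinS]; last by right.
  exact: phr_tracked_step.
- rewrite size_rcons; case: IH => [tr|/phr_meets_ballot_withinS]; last by right.
  exact: phr_tracked_step_unsupported.
Qed.

End PhragmenRemoveVoter.

Lemma seq_phragmen_participation (C : finType) : participation_unrep (@seq_phragmen C).
Proof.
move=> A k i _ _ /andP[_ lt_kC] lt_i.
apply: not_kelly_strict_remove_voter => [W [l [b [run_l [size_l ->]]]] dis|W [l [b' [run_l [size_l ->]]]]].
  have l_out : all (fun c => c \notin ballot A i) l by rewrite -committee_disjointE dis.
  by have [b' [run_l' _]] := phr_run_remove_voter lt_i run_l l_out; exists l, b'.
rewrite card_committee_gt0 => /hasP[c cl cAi].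
case: (phr_run_of_remove_voter lt_i run_l) => [[l_out _]|[l' [b [run_l' le_l' l'_in]]]].
  by move/allP/(_ c cl): l_out; rewrite cAi.
have [l'' [b'' [run_l'' size_l'' sub_l']]] := phr_run_extend (n := k) run_l' ltac:(lia).
exists (committee_of l''); split; first by exists l'', b''.
by rewrite card_committee_gt0; case/hasP: l'_in => x /sub_l' xl'' xAi; apply/hasP; exists x.
Qed.

(** * The method of equal shares *)

Lemma ltr_sum_has (R : numDomainType) (I : Type) (r : seq I) (F G : I -> R) :
  (forall j, F j <= G j) -> has (fun j => F j < G j) r ->
  \sum_(j <- r) F j < \sum_(j <- r) G j.
Proof.
move=> le_FG; elim: r => [//|j r IH] /=; rewrite !big_cons => /orP[lt_j|/IH lt_r].
  by apply: ltr_leD => //; apply: ler_sum => ? _.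
exact: ler_ltD.
Qed.

Section EqualSharesGeneral.
Variables (C : finType) (A : seq {set C}).

(* Below [p] the supporter able to pay [p] pays strictly less, so the cost drops below 1. *)
Lemma mes_cost_eq1_le x c p q : mes_cost A x c p = 1 ->
  has (fun j => p <= x j) (supporters A c) -> mes_cost A x c q = 1 -> p <= q.
Proof.
move=> cost_p /hasP[j j_supp p_le_xj] cost_q; rewrite leNgt; apply/negP => lt_qp.
suff : mes_cost A x c q < mes_cost A x c p by rewrite cost_p cost_q ltxx.
apply: ltr_sum_has => [j'|]; first by apply: le_min2 (ltW lt_qp) (lexx _).
by apply/hasP; exists j => //; rewrite (min_l p_le_xj) gt_min lt_qp.
Qed.

Lemma phr_run_size l0 b0 l b : phr_run A l0 b0 l b ->
  (size l0 <= size l)%N /\ (size l = size l0 -> l = l0 /\ b = b0).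
Proof. by elim=> [|l1 b1 c _ [le_l0 _] *|l1 b1 c _ [le_l0 _] *]; rewrite ?size_rcons; split=> //; lia. Qed.

Lemma phr_run_one_step l0 b0 l b : phr_run A l0 b0 l b -> size l = (size l0).+1 ->
  exists c, [/\ l = rcons l0 c, c \notin l0 &
    (supporters A c != [::] /\ forall c', c' \notin l0 -> supporters A c' != [::] ->
       phr_time A b0 c <= phr_time A b0 c')
    \/ (forall c', c' \notin l0 -> supporters A c' = [::])].
Proof.
case=> [|l1 b1 c run_l1 cl cs cmin|l1 b1 c run_l1 cl unsup]; rewrite ?size_rcons; first lia.
- move=> /succn_inj /(proj2 (phr_run_size run_l1))[el eb]; subst l1 b1.
  by exists c; split=> //; left.
- move=> /succn_inj /(proj2 (phr_run_size run_l1))[el eb]; subst l1 b1.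
  by exists c; split=> //; right.
Qed.

End EqualSharesGeneral.

Definition approval_profile (C : finType) (bal : nat -> C -> bool) (n : nat) : seq {set C} :=
  mkseq (fun j => [set c | bal j c]) n.

Lemma size_approval_profile (C : finType) (bal : nat -> C -> bool) n :
  size (approval_profile bal n) = n.
Proof. exact: size_mkseq. Qed.

Lemma ballot_approval_profile (C : finType) (bal : nat -> C -> bool) n j : (j < n)%N ->
  ballot (approval_profile bal n) j = [set c | bal j c].
Proof. by move=> lt_j; rewrite /ballot /approval_profile nth_mkseq. Qed.

Lemma supporters_approval_profile (C : finType) (bal : nat -> C -> bool) n c :
  supporters (approval_profile bal n) c = [seq j <- iota 0 n | bal j c].
Proof.
rewrite /supporters size_approval_profile; apply: eq_in_filter => j.
by rewrite mem_iota add0n => /andP[_ lt_j]; rewrite ballot_approval_profile // inE.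
Qed.

Lemma remove_voter0_approval_profile (C : finType) (bal : nat -> C -> bool) n :
  remove_voter (approval_profile bal n.+1) 0 = approval_profile (fun j => bal j.+1) n.
Proof.
by rewrite /remove_voter /= drop0 /approval_profile /mkseq /= -(addn0 1%N) iotaDl -map_comp.
Qed.

(* Big operators are opaque to [vm_compute]; these folds are computable copies. *)
Definition sumC (f : nat -> rat) (r : seq nat) : rat := foldr (fun j acc => f j + acc) 0 r.

Lemma big_sumC (f : nat -> rat) r : \sum_(j <- r) f j = sumC f r.
Proof. by elim: r => [|j r IH]; rewrite ?big_nil ?big_cons ?IH. Qed.

Lemma eq_sumC (f g : nat -> rat) r : f =1 g -> sumC f r = sumC g r.
Proof. by move=> eq_fg; elim: r => //= j r ->; rewrite eq_fg. Qed.

Section ComputableEqualShares.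
Variables (C : finType) (cands : seq C) (bal : nat -> C -> bool) (n : nat).
Hypothesis mem_cands : forall c, c \in cands.
Local Notation A := (approval_profile bal n).
Implicit Types (c : C) (l : seq C) (x xs : nat -> rat) (rho : C -> rat).

Definition suppC c := [seq j <- iota 0 n | bal j c].
Definition budgetC xs c := sumC xs (suppC c).
Definition affordableC xs l c := (c \notin l) && (1 <= budgetC xs c).
Definition costC xs c r := sumC (fun j => Num.min r (xs j)) (suppC c).
Definition timeC xs c := (1 - budgetC xs c) / (size (suppC c))%:R.
Definition payC xs c r : nat -> rat :=
  fun j => if j \in suppC c then xs j - Num.min r (xs j) else xs j.

(* [rho c] is the price of every affordable [c] (its value elsewhere is irrelevant). *)
Definition mes_pricesC xs l rho :=
  all (fun c => affordableC xs l c ==>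
    (costC xs c (rho c) == 1) && has (fun j => rho c <= xs j) (suppC c)) cands.
Definition mes_cheapestC xs l rho c :=
  affordableC xs l c && all (fun c' => affordableC xs l c' ==> (rho c <= rho c')) cands.
Definition phr_cheapestC xs l c :=
  [&& c \notin l, suppC c != [::] &
    all (fun c' => (c' \notin l) && (suppC c' != [::]) ==> (timeC xs c <= timeC xs c')) cands].

Lemma supporters_suppC c : supporters A c = suppC c.
Proof. exact: supporters_approval_profile. Qed.

Lemma supp_budgetC x xs c : x =1 xs -> supp_budget x A c = budgetC xs c.
Proof. by move=> e; rewrite /supp_budget supporters_suppC big_sumC; apply: eq_sumC. Qed.

Lemma mes_affordableC x xs l c : x =1 xs -> mes_affordable A x l c = affordableC xs l c.
Proof. by move=> e; rewrite /mes_affordable /affordableC (supp_budgetC _ e). Qed.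

Lemma mes_costC x xs c r : x =1 xs -> mes_cost A x c r = costC xs c r.
Proof.
move=> e; rewrite /mes_cost /costC supporters_suppC big_sumC.
by apply: eq_sumC => j; rewrite e.
Qed.

Lemma phr_timeC x xs c : x =1 xs -> phr_time A x c = timeC xs c.
Proof. by move=> e; rewrite /phr_time /timeC (supp_budgetC _ e) supporters_suppC. Qed.

Lemma payC_eq x xs c r : x =1 xs ->
  (fun j => if j \in supporters A c then x j - Num.min r (x j) else x j) =1 payC xs c r.
Proof. by move=> e j; rewrite /payC supporters_suppC !e. Qed.

Lemma mes_price_leC x xs l rho c r : x =1 xs -> mes_pricesC xs l rho ->
  affordableC xs l c -> mes_cost A x c r = 1 -> rho c <= r.
Proof.
move=> e /allP/(_ c (mem_cands c)) prices aff_c cost_r.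
have /andP[/eqP cost_rho has_rho] := implyP prices aff_c.
apply: mes_cost_eq1_le cost_r; first by rewrite (mes_costC _ _ e).
by rewrite supporters_suppC; apply: sub_has has_rho => j; rewrite e.
Qed.

Lemma mes_run_stepC k l x xs rho c : mes_run A k l x -> x =1 xs ->
  mes_pricesC xs l rho -> mes_cheapestC xs l rho c ->
  exists2 x', mes_run A k (rcons l c) x' & x' =1 payC xs c (rho c).
Proof.
move=> run_l e prices /andP[aff_c cheapest].
have /andP[/eqP cost_c _] := implyP (allP prices c (mem_cands c)) aff_c.
exists (fun j => if j \in supporters A c then x j - Num.min (rho c) (x j) else x j);
  last exact: payC_eq.
apply: mes_step => //; first by rewrite (mes_affordableC _ _ e).
  by rewrite (mes_costC _ _ e).
move=> c' r' aff_c' cost_c'; rewrite (mes_affordableC _ _ e) in aff_c'.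
apply: le_trans (implyP (allP cheapest c' (mem_cands c')) aff_c') _.
exact: mes_price_leC e prices aff_c' cost_c'.
Qed.

Lemma mes_run_choiceC x xs l rho (ok : pred C) : x =1 xs -> mes_pricesC xs l rho ->
  all (fun c => mes_cheapestC xs l rho c ==> ok c) cands ->
  forall c r, mes_affordable A x l c -> mes_cost A x c r = 1 ->
    (forall c' r', mes_affordable A x l c' -> mes_cost A x c' r' = 1 -> r <= r') ->
    r = rho c /\ ok c.
Proof.
move=> e prices oks c r aff_c cost_r rmin; rewrite (mes_affordableC _ _ e) in aff_c.
have /andP[/eqP cost_rho _] := implyP (allP prices c (mem_cands c)) aff_c.
have r_eq : r = rho c.
  apply/eqP; rewrite eq_le (mes_price_leC e prices aff_c cost_r) andbT.
  by apply: (rmin c); rewrite ?(mes_affordableC _ _ e) ?(mes_costC _ _ e).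
split=> //; apply: (implyP (allP oks c (mem_cands c))); rewrite /mes_cheapestC aff_c /=.
apply/allP => c' _; apply/implyP => aff_c'.
have /andP[/eqP cost_c' _] := implyP (allP prices c' (mem_cands c')) aff_c'.
by rewrite -r_eq; apply: (rmin c'); rewrite ?(mes_affordableC _ _ e) ?(mes_costC _ _ e).
Qed.

Lemma mes_run_doneC x xs l : x =1 xs -> all (fun c => ~~ affordableC xs l c) cands ->
  forall c, ~~ mes_affordable A x l c.
Proof. by move=> e /allP done_l c; rewrite (mes_affordableC _ _ e) done_l. Qed.

Lemma phr_run_stepC l0 b0 l x xs c : phr_run A l0 b0 l x -> x =1 xs ->
  phr_cheapestC xs l c -> exists y, phr_run A l0 b0 (rcons l c) y.
Proof.
move=> run_l e /and3P[cl cs cheapest]; eexists; apply: (phr_step run_l) => //.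
  by rewrite supporters_suppC.
move=> c' c'l c's; rewrite !(phr_timeC _ e); rewrite supporters_suppC in c's.
by apply: (implyP (allP cheapest c' (mem_cands c'))); rewrite c'l c's.
Qed.

Lemma phr_run_choiceC l x xs l' y (ok : pred C) : x =1 xs ->
  phr_run A l x l' y -> size l' = (size l).+1 ->
  has (fun c => (c \notin l) && (suppC c != [::])) cands ->
  all (fun c => phr_cheapestC xs l c ==> ok c) cands ->
  exists2 c, l' = rcons l c & ok c.
Proof.
move=> e run_l size_l' /hasP[c0 _ /andP[c0l c0s]] oks.
have [c [-> cl [[cs cmin]|unsup]]] := phr_run_one_step run_l size_l'; last first.
  by move: c0s; rewrite -supporters_suppC unsup.
exists c => //; apply: (implyP (allP oks c (mem_cands c))).
rewrite /phr_cheapestC cl -supporters_suppC cs /=.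
apply/allP => c' _; apply/implyP => /andP[c'l c's].
by rewrite -!(phr_timeC _ e); apply: cmin; rewrite ?supporters_suppC.
Qed.

End ComputableEqualShares.

Local Ltac vm_decide := vm_compute; reflexivity.

Definition o0 : 'I_4 := @Ordinal 4 0 erefl.
Definition o1 : 'I_4 := @Ordinal 4 1 erefl.
Definition o2 : 'I_4 := @Ordinal 4 2 erefl.
Definition o3 : 'I_4 := @Ordinal 4 3 erefl.
Definition cands4 : seq 'I_4 := [:: o0; o1; o2; o3].

Lemma mem_cands4 (c : 'I_4) : c \in cands4.
Proof. by case: c => [[|[|[|[|m]]]] lt_m]. Qed.

Definition ballots_ex (j : nat) (c : 'I_4) : bool :=
  if j == 0%N then c == o0
  else if (j < 3)%N then c != o0
  else if (j < 6)%N then (c == o0) || (c == o1)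
  else (c == o2) || (c == o3).

Local Notation A_ex := (approval_profile ballots_ex 10%N).
Local Notation B_ex := (approval_profile (fun j => ballots_ex j.+1) 9%N).
Local Notation pricesA := (mes_pricesC cands4 ballots_ex 10%N).
Local Notation cheapestA := (mes_cheapestC cands4 ballots_ex 10%N).
Local Notation affordableA := (affordableC ballots_ex 10%N).
Local Notation pricesB := (mes_pricesC cands4 (fun j => ballots_ex j.+1) 9%N).
Local Notation cheapestB := (mes_cheapestC cands4 (fun j => ballots_ex j.+1) 9%N).

Lemma ballot_A_ex0 : ballot A_ex 0%N = [set o0].
Proof. by apply/setP => c; rewrite ballot_approval_profile // !inE. Qed.

Lemma wf_A_ex : wf_profile A_ex.
Proof.
split=> [|X]; first by rewrite size_approval_profile.
rewrite /approval_profile => /mapP[j j_lt ->].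
have nonempty : all (fun j => has (ballots_ex j) cands4) (iota 0 10) by vm_decide.
have /hasP[c _ jc] := allP nonempty j j_lt.
by apply/set0Pn; exists c; rewrite inE.
Qed.

(* Phase 1 of equal shares on A_ex: the prices [priceA] for the initial
   budgets 3/10, then [priceA'] after buying candidate 2 or 3. *)
Definition xA : nat -> rat := fun _ => 3%:R / 10%:R.
Definition priceA (c : 'I_4) : rat :=
  match val c with 0%N => 1/4 | 1%N => 1/5 | _ => 1/6 end.
Definition xA2 := payC ballots_ex 10%N xA o2 (priceA o2).
Definition xA3 := payC ballots_ex 10%N xA o3 (priceA o3).
Definition priceA' (c : 'I_4) : rat :=
  match val c with 0%N => 1/4 | 1%N => 11/45 | _ => 1 end.
Definition xA21 := payC ballots_ex 10%N xA2 o1 (priceA' o1).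
Definition xA31 := payC ballots_ex 10%N xA3 o1 (priceA' o1).

Lemma mes_run_A_ex l x : mes_run A_ex 3%N l x ->
  [\/ l = [::] /\ x =1 xA,
      (l = [:: o2] /\ x =1 xA2) \/ (l = [:: o3] /\ x =1 xA3)
    | (l = [:: o2; o1] /\ x =1 xA21) \/ (l = [:: o3; o1] /\ x =1 xA31)].
Proof.
elim: l x / => [|l x c r _ IH aff_c cost_r rmin].
  by constructor 1; split=> // j; rewrite size_approval_profile.
case: IH aff_c cost_r rmin => [[-> e]|[[-> e]|[-> e]]|[[-> e]|[-> e]]] aff_c cost_r rmin.
- have prices : pricesA xA [::] priceA by vm_decide.
  have choice : all (fun c => cheapestA xA [::] priceA c ==> (c == o2) || (c == o3)) cands4.
    by vm_decide.
  have [-> /orP[]/eqP ->] := mes_run_choiceC mem_cands4 e prices choice aff_c cost_r rmin.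
    by constructor 2; left; split; [|exact: (payC_eq ballots_ex 10%N o2 (priceA o2) e)].
  by constructor 2; right; split; [|exact: (payC_eq ballots_ex 10%N o3 (priceA o3) e)].
- have prices : pricesA xA2 [:: o2] priceA' by vm_decide.
  have choice : all (fun c => cheapestA xA2 [:: o2] priceA' c ==> (c == o1)) cands4 by vm_decide.
  have [-> /eqP ->] := mes_run_choiceC mem_cands4 e prices choice aff_c cost_r rmin.
  by constructor 3; left; split; [|exact: (payC_eq ballots_ex 10%N o1 (priceA' o1) e)].
- have prices : pricesA xA3 [:: o3] priceA' by vm_decide.
  have choice : all (fun c => cheapestA xA3 [:: o3] priceA' c ==> (c == o1)) cands4 by vm_decide.
  have [-> /eqP ->] := mes_run_choiceC mem_cands4 e prices choice aff_c cost_r rmin.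
  by constructor 3; right; split; [|exact: (payC_eq ballots_ex 10%N o1 (priceA' o1) e)].
- have none : all (fun c => ~~ affordableA xA21 [:: o2; o1] c) cands4 by vm_decide.
  by rewrite (negbTE (mes_run_doneC mem_cands4 e none c)) in aff_c.
- have none : all (fun c => ~~ affordableA xA31 [:: o3; o1] c) cands4 by vm_decide.
  by rewrite (negbTE (mes_run_doneC mem_cands4 e none c)) in aff_c.
Qed.

Lemma mes_A_ex_disjoint W : mes A_ex 3%N W -> W :&: ballot A_ex 0%N = set0.
Proof.
move=> [l [x [l' [y [run_l [done_l [run_l' [size_l' ->]]]]]]]].
rewrite ballot_A_ex0; apply/eqP; rewrite committee_disjointE.
case: (mes_run_A_ex run_l) done_l run_l' => [[-> e]|[[-> e]|[-> e]]|[[-> e]|[-> e]]] done_l run_l';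
  try by move: (done_l o0); rewrite (mes_affordableC _ _ _ _ e); vm_compute.
- have supported : has (fun c => (c \notin [:: o2; o1]) && (suppC ballots_ex 10%N c != [::])) cands4.
    by vm_decide.
  have choice : all (fun c => phr_cheapestC cands4 ballots_ex 10%N xA21 [:: o2; o1] c ==> (c == o3)) cands4.
    by vm_decide.
  by have [c -> /eqP ->] := phr_run_choiceC mem_cands4 e run_l' size_l' supported choice; rewrite /= !inE.
- have supported : has (fun c => (c \notin [:: o3; o1]) && (suppC ballots_ex 10%N c != [::])) cands4.
    by vm_decide.
  have choice : all (fun c => phr_cheapestC cands4 ballots_ex 10%N xA31 [:: o3; o1] c ==> (c == o2)) cands4.
    by vm_decide.
  by have [c -> /eqP ->] := phr_run_choiceC mem_cands4 e run_l' size_l' supported choice; rewrite /= !inE.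
Qed.

Lemma mes_A_ex_outcome : mes A_ex 3%N (committee_of [:: o2; o1; o3]).
Proof.
have e : (fun _ => 3%:R / (size A_ex)%:R) =1 xA by move=> j; rewrite size_approval_profile.
have prices : pricesA xA [::] priceA by vm_decide.
have cheapest : cheapestA xA [::] priceA o2 by vm_decide.
have [x2 run2 e2] := mes_run_stepC mem_cands4 (mes_start A_ex 3%N) e prices cheapest.
have prices2 : pricesA xA2 [:: o2] priceA' by vm_decide.
have cheapest2 : cheapestA xA2 [:: o2] priceA' o1 by vm_decide.
have [x21 run21 e21] := mes_run_stepC mem_cands4 run2 e2 prices2 cheapest2.
have none : all (fun c => ~~ affordableA xA21 [:: o2; o1] c) cands4 by vm_decide.
have cheapest3 : phr_cheapestC cands4 ballots_ex 10%N xA21 [:: o2; o1] o3 by vm_decide.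
have [y run3] := phr_run_stepC mem_cands4 (phr_refl _ _ _) e21 cheapest3.
exists [:: o2; o1], x21, [:: o2; o1; o3], y; split; first exact: run21.
split; first by move=> c; exact: (mes_run_doneC mem_cands4 e21 none c).
split; first exact: run3.
by split.
Qed.

(* Without voter 0 the budgets are 1/3, and after candidates 2 and 3 the
   voters 3-5 can buy candidate 0 on their own, tied with candidate 1. *)
Definition xB : nat -> rat := fun _ => 3%:R / 9%:R.
Definition priceB (c : 'I_4) : rat :=
  match val c with 0%N => 1/3 | 1%N => 1/5 | _ => 1/6 end.
Definition xB2 := payC (fun j => ballots_ex j.+1) 9%N xB o2 (priceB o2).
Definition priceB2 (c : 'I_4) : rat :=
  match val c with 0%N => 1/3 | 1%N => 2/9 | _ => 1/6 end.
Definition xB23 := payC (fun j => ballots_ex j.+1) 9%N xB2 o3 (priceB2 o3).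
Definition priceB23 (c : 'I_4) : rat :=
  match val c with 0%N | 1%N => 1/3 | _ => 1 end.
Definition xB230 := payC (fun j => ballots_ex j.+1) 9%N xB23 o0 (priceB23 o0).

Lemma mes_B_ex_outcome : mes B_ex 3%N (committee_of [:: o2; o3; o0]).
Proof.
have e : (fun _ => 3%:R / (size B_ex)%:R) =1 xB by move=> j; rewrite size_approval_profile.
have prices : pricesB xB [::] priceB by vm_decide.
have cheapest : cheapestB xB [::] priceB o2 by vm_decide.
have [x2 run2 e2] := mes_run_stepC mem_cands4 (mes_start B_ex 3%N) e prices cheapest.
have prices2 : pricesB xB2 [:: o2] priceB2 by vm_decide.
have cheapest2 : cheapestB xB2 [:: o2] priceB2 o3 by vm_decide.
have [x23 run23 e23] := mes_run_stepC mem_cands4 run2 e2 prices2 cheapest2.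
have prices23 : pricesB xB23 [:: o2; o3] priceB23 by vm_decide.
have cheapest23 : cheapestB xB23 [:: o2; o3] priceB23 o0 by vm_decide.
have [x230 run230 e230] := mes_run_stepC mem_cands4 run23 e23 prices23 cheapest23.
have none : all (fun c => ~~ affordableC (fun j => ballots_ex j.+1) 9%N xB230 [:: o2; o3; o0] c) cands4.
  by vm_decide.
exists [:: o2; o3; o0], x230, [:: o2; o3; o0], x230; split; first exact: run230.
split; first by move=> c; exact: (mes_run_doneC mem_cands4 e230 none c).
split; first exact: phr_refl.
by split.
Qed.

Lemma mes_A_ex_kelly_strict :
  kelly_strict (ballot A_ex 0%N) (mes (remove_voter A_ex 0%N) 3%N) (mes A_ex 3%N).
Proof.
rewrite remove_voter0_approval_profile; split.
  by move=> W W' _ /mes_A_ex_disjoint ->; rewrite cards0.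
exists (committee_of [:: o2; o3; o0]), (committee_of [:: o2; o1; o3]).
split; first exact: mes_B_ex_outcome.
split; first exact: mes_A_ex_outcome.
by rewrite (mes_A_ex_disjoint mes_A_ex_outcome) cards0 ballot_A_ex0 card_committee_gt0 /= !inE.
Qed.

Theorem proposition1 :
  (forall (C : finType), (1 < #|C|)%N ->
     forall s : nat -> rat, thiele_fn s -> participation_unrep (@seq_thiele C s)) /\
  (forall (C : finType), (1 < #|C|)%N -> participation_unrep (@seq_phragmen C)) /\
  (exists (C : finType), (1 < #|C|)%N /\
     exists (A : seq {set C}) (k i : nat),
       [/\ wf_profile A, (2 <= size A)%N, (1 <= k < #|C|)%N & (i < size A)%N] /\
       (exists W, mes A k W /\ W :&: ballot A i = set0) /\
       (forall W, mes A k W -> W :&: ballot A i = set0) /\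
       kelly_strict (ballot A i) (mes (remove_voter A i) k) (mes A k)).
Proof.
split; first by move=> C _ s; exact: seq_thiele_participation.
split; first by move=> C _; exact: seq_phragmen_participation.
exists ('I_4 : finType); split; first by rewrite card_ord.
exists A_ex, 3%N, 0%N; split.
  by split; rewrite ?size_approval_profile ?card_ord //; exact: wf_A_ex.
split; first by exists (committee_of [:: o2; o1; o3]); split; [exact: mes_A_ex_outcome | exact: mes_A_ex_disjoint mes_A_ex_outcome].
split; [exact: mes_A_ex_disjoint | exact: mes_A_ex_kelly_strict].
Qed.
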